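(* Let $k\ge 0$ and let $a_i\ge b_i\ge 0$ be integers for $i=0,1,\dots,k$. Suppose that, at some moment of a game on $K_{\mathbb N}$ in which in each round Builder selects an unselected edge and Painter colours it red or blue, the coloured graph $G$ of already coloured edges contains vertex-disjoint paths $P(a_0,b_0),P(a_1,b_1),\dots,P(a_k,b_k)$. Then Builder can force, within at most $2k$ further rounds, either a red $C_3$ or a blue path on $a_0+\sum_{i=1}^k b_i$ vertices.
   Context: For integers $s,t>0$, $P(s,t)$ denotes the coloured path on $s+t$ vertices obtained from two vertex-disjoint blue paths on $s$ and $t$ vertices by joining an end of one to an end of the other by a red edge; $P(s,0)$ denotes a blue path on $s$ vertices. ''Builder can force within $r$ rounds'' means Builder has a strategy for selecting edges such that, whatever Painter does, after at most $r$ more rounds the coloured graph contains the stated structure. *)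

(* vertices of K_N are natural numbers. *)
From Stdlib Require Import List Arith.
Import ListNotations.

Inductive colour := Red | Blue.

(* A coloured graph: the finite list of already coloured edges (u, v, colour);
   edges are unordered, so (u,v,c) and (v,u,c) denote the same coloured edge. *)
Definition cgraph := list (nat * nat * colour).

Definition has_edge (G : cgraph) (c : colour) (u v : nat) : Prop :=
  In (u, v, c) G \/ In (v, u, c) G.

Definition selected (G : cgraph) (u v : nat) : Prop :=
  exists c, has_edge G c u v.

Definition valid_cgraph (G : cgraph) : Prop :=
  (forall u v c, In (u, v, c) G -> u <> v) /\
  (forall u v c c', has_edge G c u v -> has_edge G c' u v -> c = c').

Fixpoint path_edges (G : cgraph) (c : colour) (p : list nat) : Prop :=
  match p with
  | x :: ((y :: _) as q) => has_edge G c x y /\ path_edges G c q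
  | _ => True
  end.

Definition blue_path (G : cgraph) (p : list nat) : Prop :=
  NoDup p /\ path_edges G Blue p.

Definition has_blue_path (G : cgraph) (m : nat) : Prop :=
  exists p, length p = m /\ blue_path G p.

Definition has_red_C3 (G : cgraph) : Prop :=
  exists u v w, u <> v /\ v <> w /\ u <> w /\
    has_edge G Red u v /\ has_edge G Red v w /\ has_edge G Red u w.

(* The list vs of vertices spans a copy of P(s,t) in G: vs = xs ++ ys where
   xs is a blue path on s vertices, ys a blue path on t vertices, and (if t > 0)
   an end of xs is joined to an end of ys by a red edge (P(s,0) = blue path). *)
Definition is_P (G : cgraph) (s t : nat) (vs : list nat) : Prop :=
  exists xs ys, vs = xs ++ ys /\ NoDup vs /\
    length xs = s /\ length ys = t /\
    path_edges G Blue xs /\ path_edges G Blue ys /\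
    (t = 0 \/ exists xs' x y ys', xs = xs' ++ [x] /\ ys = y :: ys' /\
                                  has_edge G Red x y).

Inductive forces (Q : cgraph -> Prop) : nat -> cgraph -> Prop :=
| forces_now : forall r G, Q G -> forces Q r G
| forces_step : forall r G u v, u <> v -> ~ selected G u v ->
    (forall c, forces Q r ((u, v, c) :: G)) -> forces Q (S r) G.

(** Builder keeps a blue path [M], ending at a vertex [x], that avoids the
    pieces not used yet, and absorbs the pieces one at a time in two rounds
    each.  Let the piece [P(s,t)] consist of a blue path ending at [x1], a
    red edge [x1 y1] and a blue path starting at [y1].  Builder selects
    [x y1]: if it is blue, [M] grows by the [t] vertices of the second path.
    If it is red, Builder selects [x x1]: red closes the red triangle
    [x y1 x1], blue lets [M] grow by the [s >= t] vertices of the first path,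
    traversed backwards.  Starting from the blue [a 0]-path of [P(a 0, b 0)]
    this gives the theorem after [2k] rounds. *)

From Stdlib Require Import List Arith Lia Permutation.
Import ListNotations.

Lemma NoDup_app_remove_mid {A : Type} (l1 l2 l3 : list A) :
  NoDup (l1 ++ l2 ++ l3) -> NoDup (l1 ++ l3).
Proof.
  intros h. apply (NoDup_app_remove_l l2).
  exact (Permutation_NoDup (Permutation_app_swap_app l1 l2 l3) h).
Qed.

Lemma NoDup_app_neq {A : Type} (l1 l2 : list A) u v :
  NoDup (l1 ++ l2) -> In u l1 -> In v l2 -> u <> v.
Proof.
  intros h hu hv <-. destruct (in_split u l1) as (l & l' & ->); auto.
  rewrite <- app_assoc in h. apply NoDup_remove_2 in h.
  apply h, in_or_app; right; apply in_or_app; auto.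
Qed.

Lemma has_edge_sym G c u v : has_edge G c u v -> has_edge G c v u.
Proof. unfold has_edge; tauto. Qed.

Lemma has_edge_incl G H c u v : incl G H -> has_edge G c u v -> has_edge H c u v.
Proof. intros hGH [h | h]; [left | right]; auto. Qed.

Lemma has_edge_dec G c u v : {has_edge G c u v} + {~ has_edge G c u v}.
Proof.
  assert (edge_eq_dec : forall e f : nat * nat * colour, {e = f} + {e <> f})
    by (repeat decide equality).
  unfold has_edge.
  destruct (In_dec edge_eq_dec (u, v, c) G), (In_dec edge_eq_dec (v, u, c) G); tauto.
Qed.

Lemma path_edges_incl G H c p : incl G H -> path_edges G c p -> path_edges H c p.
Proof.
  intros hGH. induction p as [|x [|y p] IH]; cbn; auto.
  intros [hxy hp]; split; [eauto using has_edge_incl | exact (IH hp)].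
Qed.

Lemma path_edges_app_l G c p q : path_edges G c (p ++ q) -> path_edges G c p.
Proof.
  induction p as [|x [|y p] IH]; cbn; auto.
  intros [hxy hp]; split; [exact hxy | exact (IH hp)].
Qed.

Lemma path_edges_join G c p x y q :
  path_edges G c (p ++ [x]) -> path_edges G c (y :: q) -> has_edge G c x y ->
  path_edges G c (p ++ x :: y :: q).
Proof.
  induction p as [|z [|w p] IH]; cbn; auto.
  - intros [hzx _] hq hxy; auto.
  - intros [hzw hp] hq hxy; split; [exact hzw | exact (IH hp hq hxy)].
Qed.

Lemma path_edges_rev G c p : path_edges G c p -> path_edges G c (rev p).
Proof.
  induction p as [|x [|y p] IH]; cbn; auto.
  intros [hxy hp]. specialize (IH hp). simpl in IH.
  rewrite <- app_assoc. apply path_edges_join; simpl; auto using has_edge_sym.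
Qed.

Lemma is_P_incl G H s t vs : incl G H -> is_P G s t vs -> is_P H s t vs.
Proof.
  intros hGH (xs & ys & e & nd & hs & ht & hxs & hys & hred).
  exists xs, ys; repeat split; eauto using path_edges_incl.
  destruct hred as [ht0 | (xs' & x & y & ys' & exs & eys & hxy)]; [left | right]; auto.
  exists xs', x, y, ys'; eauto using has_edge_incl.
Qed.

Lemma has_blue_path_of_path G M n :
  NoDup M -> path_edges G Blue M -> n <= length M -> has_blue_path G n.
Proof.
  intros hnd hM hn. exists (firstn n M).
  rewrite <- (firstn_skipn n M) in hnd, hM.
  split; [apply firstn_length_le; lia | split].
  - exact (NoDup_app_remove_r _ _ hnd).
  - exact (path_edges_app_l _ _ _ _ hM).
Qed.

Section Forcing.

Variable Q : cgraph -> Prop.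

Lemma forces_S r G : forces Q r G -> forces Q (S r) G.
Proof.
  induction 1.
  - now apply forces_now.
  - eapply forces_step; eauto.
Qed.

Lemma forces_le r r' G : r <= r' -> forces Q r G -> forces Q r' G.
Proof. induction 1; auto using forces_S. Qed.

Lemma forces_by_edge r G u v : u <> v ->
  (forall c H, incl G H -> has_edge H c u v -> forces Q r H) -> forces Q (S r) G.
Proof.
  intros huv hforce.
  destruct (has_edge_dec G Red u v) as [h | hR];
    [|destruct (has_edge_dec G Blue u v) as [h | hB]].
  1, 2: apply forces_S; eapply hforce; [apply incl_refl | exact h].
  apply forces_step with u v; auto.
  - intros [[] h]; auto.
  - intros c. apply (hforce c); [apply incl_tl, incl_refl | left; now left].
Qed.

End Forcing.

Lemma forces_bind (Q1 Q2 : cgraph -> Prop) r s G :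
  forces Q1 r G -> (forall H, incl G H -> Q1 H -> forces Q2 s H) ->
  forces Q2 (r + s) G.
Proof.
  induction 1 as [r G hQ | r G u v huv hsel _ IH]; intros hcont.
  - apply (forces_le _ s); [lia | apply hcont; auto using incl_refl].
  - simpl. apply forces_step with u v; auto.
    intros c. apply IH. intros H hGH. apply hcont.
    eapply incl_tran; [apply incl_tl, incl_refl | exact hGH].
Qed.

Lemma forces_impl (Q1 Q2 : cgraph -> Prop) r G :
  (forall H, incl G H -> Q1 H -> Q2 H) -> forces Q1 r G -> forces Q2 r G.
Proof.
  intros hQ h. rewrite <- (Nat.add_0_r r).
  apply (forces_bind _ _ _ _ _ h). intros H hGH hQ1. apply forces_now; auto.
Qed.

Lemma forces_triangle_or_join G M x xs x1 y1 ys :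
  x <> y1 -> x <> x1 -> x1 <> y1 ->
  path_edges G Blue (M ++ [x]) -> path_edges G Blue (xs ++ [x1]) ->
  path_edges G Blue (y1 :: ys) -> has_edge G Red x1 y1 ->
  forces (fun H => has_red_C3 H \/ path_edges H Blue (M ++ x :: y1 :: ys) \/
                   path_edges H Blue (M ++ x :: x1 :: rev xs)) 2 G.
Proof.
  intros hxy1 hxx1 hx1y1 hM hxs hys hred.
  apply forces_by_edge with x y1; auto. intros [] H1 hGH1 hxy.
  - apply forces_by_edge with x x1; auto. intros [] H2 hH12 hxx.
    all: assert (hGH2 : incl G H2) by (eapply incl_tran; eauto).
    + apply forces_now. left. exists x, y1, x1.
      repeat split; eauto using has_edge_incl, has_edge_sym.
    + apply forces_now. right; right. apply path_edges_join; auto.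
      * eapply path_edges_incl; eauto.
      * change (x1 :: rev xs) with (rev [x1] ++ rev xs). rewrite <- rev_app_distr.
        apply path_edges_rev. eapply path_edges_incl; eauto.
  - apply forces_now. right; left.
    apply path_edges_join; eauto using path_edges_incl.
Qed.

Definition long_blue_path_avoiding (n : nat) (R : list nat) (H : cgraph) : Prop :=
  exists M, path_edges H Blue M /\ NoDup (M ++ R) /\ n <= length M.

Lemma forces_absorb_P G M s t vs R :
  t <= s -> path_edges G Blue M -> is_P G s t vs -> NoDup (M ++ vs ++ R) ->
  forces (fun H => has_red_C3 H \/ long_blue_path_avoiding (length M + t) R H) 2 G.
Proof.
  intros hts hM (xs & ys & -> & hnd & hs & ht & hxs & hys & hred) hN.
  rewrite <- app_assoc in hN.
  assert (hNys : NoDup (M ++ ys ++ R)) by exact (NoDup_app_remove_mid _ xs _ hN).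
  assert (hNxs : NoDup (M ++ xs ++ R)).
  { rewrite app_assoc in hN |- *. exact (NoDup_app_remove_mid _ ys _ hN). }
  destruct hred as [ht0 | (xs' & x1 & y1 & ys' & -> & -> & hred)].
  { apply forces_now. right. exists M.
    split; [|split]; [auto | exact (NoDup_app_remove_mid _ _ _ hNys) | lia]. }
  destruct M as [|m M] using rev_ind.
  { apply forces_now. right. exists (xs' ++ [x1]). split; [|split]; simpl; auto. lia. }
  clear IHM. rename m into x.
  assert (hxx1 : x <> x1)
    by (apply (NoDup_app_neq _ _ _ _ hNxs); rewrite ?in_app_iff; simpl; auto).
  assert (hxy1 : x <> y1)
    by (apply (NoDup_app_neq _ _ _ _ hNys); rewrite ?in_app_iff; simpl; auto).
  assert (hx1y1 : x1 <> y1)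
    by (apply (NoDup_app_neq _ _ _ _ hnd); rewrite ?in_app_iff; simpl; auto).
  eapply forces_impl; [|exact (forces_triangle_or_join _ _ _ _ _ _ _
                                 hxy1 hxx1 hx1y1 hM hxs hys hred)].
  intros H _ [hC3 | [hjoin | hjoin]]; [now left | right | right].
  - exists (M ++ x :: y1 :: ys'). split; [|split]; auto.
    + rewrite <- app_assoc in hNys. rewrite <- app_assoc. exact hNys.
    + rewrite !length_app in *. simpl in *. lia.
  - exists (M ++ x :: x1 :: rev xs'). split; [|split]; auto.
    + replace (M ++ x :: x1 :: rev xs') with ((M ++ [x]) ++ rev (xs' ++ [x1]))
        by (rewrite rev_app_distr, <- app_assoc; reflexivity).
      rewrite <- app_assoc. eapply Permutation_NoDup; [|exact hNxs].
      apply Permutation_app_head, Permutation_app_tail, Permutation_rev.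
    + rewrite !length_app in *. simpl in *. rewrite length_rev. lia.
Qed.

Lemma forces_blue_path_through_P (a b : nat -> nat) (P : nat -> list nat) js :
  forall G M n,
  path_edges G Blue M ->
  (forall i, In i js -> b i <= a i /\ is_P G (a i) (b i) (P i)) ->
  NoDup (M ++ flat_map P js) ->
  n <= length M + list_sum (map b js) ->
  forces (fun H => has_red_C3 H \/ has_blue_path H n) (2 * length js) G.
Proof.
  induction js as [|j js IH]; intros G M n hM hP hN hn.
  - apply forces_now. right. simpl in hN, hn. rewrite app_nil_r in hN.
    apply (has_blue_path_of_path _ M); auto. lia.
  - destruct (hP j) as [hab hPj]; [now left |].
    replace (2 * length (j :: js)) with (2 + 2 * length js) by (simpl; lia).
    simpl in hN, hn.
    apply (forces_bind _ _ _ _ _ (forces_absorb_P _ _ _ _ _ _ hab hM hPj hN)).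
    intros H hGH [hC3 | (M' & hM' & hN' & hlen)]; [now apply forces_now; left |].
    apply (IH H M'); auto; [|lia].
    intros i hi. destruct (hP i) as [hab' hPi]; [now right | eauto using is_P_incl].
Qed.

Theorem lemma2 (k : nat) (a b : nat -> nat) (G : cgraph) (P : nat -> list nat) :
  (forall i, i <= k -> b i <= a i) ->
  valid_cgraph G ->
  (forall i, i <= k -> is_P G (a i) (b i) (P i)) ->
  NoDup (flat_map P (seq 0 (S k))) ->
  forces (fun H => has_red_C3 H \/
                   has_blue_path H (a 0 + list_sum (map b (seq 1 k))))
         (2 * k) G.
Proof.
  intros hab _ hP hN.
  destruct (hP 0) as (xs & ys & e & _ & hlen & _ & hxs & _ & _); [lia |].
  replace (2 * k) with (2 * length (seq 1 k)) by now rewrite length_seq.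
  apply (forces_blue_path_through_P a b P _ G xs); auto.
  - intros i hi. apply in_seq in hi. split; [apply hab | apply hP]; lia.
  - simpl in hN. rewrite e, <- app_assoc in hN.
    exact (NoDup_app_remove_mid _ _ _ hN).
  - lia.
Qed.
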